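(* For every nonempty finite poset $X$, \[ Z_{D(X)}(x)=\frac{x^3}{(1-x)^2}\,\frac{d}{dx}Z_X(x),\qquad Z^+_{D(X)}(x)=\frac{x}{(1-x)^2}\,\frac{d}{dx}Z^+_X(x). \] In particular, for $n\ge1$, $Z_{D(\langle n\rangle)}=n\,\zeta_{n+2}+(n+1)\,\zeta_{n+3}$, where $\zeta_j=\frac{x^j}{(1-x)^{j+1}}$.
   Context: For $n\ge1$, $\langle n\rangle$ is the chain $1<\dots<n$. For a finite poset $X$, $\Omega(X,n)$ (resp. $\Omega^+(X,n)$) is the number of maps $f:X\to\langle n\rangle$ with $u<v\Rightarrow f(u)<f(v)$ (resp. $u\le v\Rightarrow f(u)\le f(v)$); $Z_X(x)=\sum_{n\ge1}\Omega(X,n)x^n$ and $Z^+_X(x)=\sum_{n\ge1}\Omega^+(X,n)x^n$. The concatenation $\mu(Y,W)$ is the disjoint union of $Y$ and $W$ with their orders and every element of $Y$ below every element of $W$; $Y\sqcup W$ is the disjoint union with no relations between $Y$ and $W$. The handle operation is $D(X)=\mu\big(\langle1\rangle,\mu(\langle1\rangle\sqcup X,\langle1\rangle)\big)$, i.e. $X$ together with a new minimum $x_0$, a new maximum $x_1$, and a new element $y$ with $x_0<y<x_1$ incomparable to all elements of $X$. *)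

From mathcomp Require Import all_boot all_order all_algebra.
Set Implicit Arguments. Unset Strict Implicit. Unset Printing Implicit Defensive.
Import GRing.Theory Num.Theory.
Local Open Scope ring_scope.

Definition is_poset (T : finType) (le : rel T) : Prop :=
  [/\ reflexive le, antisymmetric le & transitive le].

Definition slt (T : finType) (le : rel T) : rel T := fun u v => (u != v) && le u v.

(* Omega(X,n): strictly order-preserving maps X -> <n>; the chain <n> = {1<..<n}
   is represented by 'I_n = {0<..<n-1} with the usual order. *)
Definition Omega (T : finType) (le : rel T) (n : nat) : nat :=
  #|[set f : {ffun T -> 'I_n} |
     [forall u, forall v, slt le u v ==> (f u < f v)%N]]|.

Definition OmegaP (T : finType) (le : rel T) (n : nat) : nat :=
  #|[set f : {ffun T -> 'I_n} |
     [forall u, forall v, le u v ==> (f u <= f v)%N]]|.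

Definition fps := nat -> rat.

Definition fadd (f g : fps) : fps := fun n => f n + g n.
Definition fscale (c : rat) (f : fps) : fps := fun n => c * f n.
Definition fmul (f g : fps) : fps := fun n => \sum_(i < n.+1) f i * g (n - i)%N.
Definition fone : fps := fun n => (n == 0%N)%:R.
Definition fX : fps := fun n => (n == 1%N)%:R.
Definition fexp (f : fps) (k : nat) : fps := iter k (fmul f) fone.
Definition fderiv (f : fps) : fps := fun n => f n.+1 *+ n.+1.

Fixpoint fps_inv_seq (f : fps) (n : nat) : seq rat :=
  match n with
  | 0%N => [:: (f 0%N)^-1]
  | m.+1 => let s := fps_inv_seq f m in
            rcons s (- (f 0%N)^-1 *
                       \sum_(1 <= i < n.+1) f i * nth 0 s (n - i)%N)
  end.
Definition fps_inv (f : fps) : fps := fun n => nth 0 (fps_inv_seq f n) n.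

Definition f1mX : fps := fadd fone (fscale (-1) fX).

Definition ZX (T : finType) (le : rel T) : fps :=
  fun n => if n is 0%N then 0 else (Omega le n)%:R.
Definition ZXP (T : finType) (le : rel T) : fps :=
  fun n => if n is 0%N then 0 else (OmegaP le n)%:R.

Definition zeta (j : nat) : fps := fmul (fexp fX j) (fps_inv (fexp f1mX j.+1)).

(* carrier: T + 'I_3, where inr 0 = x0 (new minimum), inr 1 = y, inr 2 = x1 (new max) *)
Definition D_le (T : finType) (le : rel T) : rel (T + 'I_3)%type :=
  fun u v =>
    match u, v with
    | inl a, inl b => le a b
    | inr i, inr j => (i == j) || ((nat_of_ord i < nat_of_ord j)%N)
    | inr i, inl _ => nat_of_ord i == 0%N
    | inl _, inr j => nat_of_ord j == 2%N
    end.

Definition chain_le (n : nat) : rel 'I_n := fun i j => (i <= j)%N.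

(* A map F on D(X) = X + {x0 < y < x1} is the same
   as its values a = F x0, b = F x1, c = F y together with its restriction g to X, and
   F is order-preserving iff a < c < b and g is an order-preserving map into the open
   window ]a, b[ (resp. a <= c <= b and g maps into [a, b]).  Counting the choices of c
   and of g, and grouping the pairs (a, b) by their gap d = b - a, gives
     Omega(D X, n)   = sum_(d < n) (n - d) * (d - 1) * Omega(X, d - 1),
     Omega^+(D X, n) = sum_(d < n) (n - d) * (d + 1) * Omega^+(X, d + 1).
   These convolutions are exactly the coefficients of x^3/(1-x)^2 * Z_X' and
   x/(1-x)^2 * Z^+_X', since x^(s+1)/(1-x)^2 has coefficients (i - s)_+.
   For the chain <n>, Omega(<n>, k) = C(k, n) and a binomial summation gives the
   coefficients n C(m, n+2) + (n+1) C(m, n+3) of n zeta_(n+2) + (n+1) zeta_(n+3).  The identities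
   hold for an arbitrary relation on X. *)

From mathcomp Require Import all_boot all_order all_algebra.
From mathcomp Require Import zify.
From Stdlib Require Import FunctionalExtensionality.
Set Implicit Arguments. Unset Strict Implicit. Unset Printing Implicit Defensive.
Import GRing.Theory.
Local Open Scope ring_scope.

Definition poly_of (N : nat) (f : fps) : {poly rat} := \poly_(i < N) f i.

(* Coefficients of a product only depend on truncations: this transfers the ring
   laws of polynomials to the convolution product of series. *)
Lemma fmul_poly N f g n : (n < N)%N -> fmul f g n = (poly_of N f * poly_of N g)`_n.
Proof.
move=> ltnN; rewrite coefM; apply: eq_bigr => i _.
have le_in : (i <= n)%N by rewrite -ltnS.
by rewrite !coef_poly (leq_ltn_trans le_in ltnN) (leq_ltn_trans (leq_subr i n) ltnN).
Qed.

Lemma fmulC f g : fmul f g = fmul g f.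
Proof.
by apply: functional_extensionality => n; rewrite !(fmul_poly _ _ (ltnSn n)) mulrC.
Qed.

Lemma fmul_poly3 N f g h n : (n < N)%N ->
  fmul (fmul f g) h n = (poly_of N f * poly_of N g * poly_of N h)`_n.
Proof.
move=> ltnN; rewrite [RHS]coefM; apply: eq_bigr => i _.
have le_in : (i <= n)%N by rewrite -ltnS.
rewrite -fmul_poly ?(leq_ltn_trans le_in ltnN) // coef_poly.
by rewrite (leq_ltn_trans (leq_subr i n) ltnN).
Qed.

Lemma fmulA f g h : fmul f (fmul g h) = fmul (fmul f g) h.
Proof.
apply: functional_extensionality => n.
by rewrite fmulC !(fmul_poly3 _ _ _ (ltnSn n)) mulrC mulrA.
Qed.

Lemma fmul1 f : fmul fone f = f.
Proof.
apply: functional_extensionality => n.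
rewrite /fmul big_ord_recl big1 => [|i _]; first by rewrite /fone mul1r subn0 addr0.
by rewrite /fone /= mul0r.
Qed.

Lemma fmulDl f g h : fmul (fadd f g) h = fadd (fmul f h) (fmul g h).
Proof.
apply: functional_extensionality => n; rewrite /fmul /fadd -big_split.
by apply: eq_bigr => i _; rewrite mulrDl.
Qed.

Lemma fmulZl c f g : fmul (fscale c f) g = fscale c (fmul f g).
Proof.
apply: functional_extensionality => n; rewrite /fmul /fscale mulr_sumr.
by apply: eq_bigr => i _; rewrite mulrA.
Qed.

Lemma fmulX_shift h n : fmul fX h n = if n is m.+1 then h m else 0.
Proof.
rewrite /fmul big_ord_recl /fX mul0r add0r; case: n => [|m]; first by rewrite big_ord0.
rewrite big_ord_recl big1 => [|i _]; last by rewrite /= mul0r.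
by rewrite /= mul1r subn1 addr0.
Qed.

Lemma fmulXn_shift j h n : fmul (fexp fX j) h n = if (n < j)%N then 0 else h (n - j)%N.
Proof.
elim: j n => [|j IH] n; first by rewrite fmul1 subn0.
by rewrite -fmulA fmulX_shift; case: n => [|n] //; rewrite IH.
Qed.

Lemma fmul_1mX h n : fmul f1mX h n = h n - fmul fX h n.
Proof. by rewrite /f1mX fmulDl fmulZl fmul1 /fadd /fscale mulN1r. Qed.

(* The expansion of 1/(1-x)^(K+1): its i-th coefficient is C(i + K, K). *)
Definition binom_series (K : nat) : fps := fun i => ('C(i + K, K))%:R.

(* Pascal's rule, read as (1 - x) * 1/(1-x)^(K+2) = 1/(1-x)^(K+1). *)
Lemma fmul_1mX_binom K : fmul f1mX (binom_series K.+1) = binom_series K.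
Proof.
apply: functional_extensionality => n; rewrite fmul_1mX fmulX_shift /binom_series.
case: n => [|n]; first by rewrite !add0n !binn subr0.
by rewrite !addSn !addnS binS natrD addrAC subrr add0r.
Qed.

Lemma fmul_1mX_binom0 : fmul f1mX (binom_series 0) = fone.
Proof.
apply: functional_extensionality => n; rewrite fmul_1mX fmulX_shift /binom_series /fone.
by case: n => [|n]; rewrite !addn0 !bin0 ?subr0 ?subrr.
Qed.

Lemma fmul_pow1mX_binom k K :
  fmul (fexp f1mX k) (binom_series (k + K)) = binom_series K.
Proof.
elim: k => [|k IH]; first exact: fmul1.
by rewrite /= -/(fexp f1mX k) [fmul f1mX _]fmulC -fmulA addSn fmul_1mX_binom.
Qed.

Lemma fps_inv_seq_size f n : size (fps_inv_seq f n) = n.+1.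
Proof. by elim: n => [|n IH] //=; rewrite size_rcons IH. Qed.

Lemma fps_inv_seq_nth f n i : (i <= n)%N -> nth 0 (fps_inv_seq f n) i = fps_inv f i.
Proof.
elim: n i => [|n IH] i le_in; first by move: le_in; rewrite leqn0 => /eqP ->.
case: (ltnP i n.+1) => [lt_in | le_ni].
  by rewrite /= nth_rcons fps_inv_seq_size lt_in IH.
by have -> : i = n.+1 by apply/eqP; rewrite eqn_leq le_in le_ni.
Qed.

Lemma fps_invS f n : fps_inv f n.+1 =
  - (f 0%N)^-1 * \sum_(1 <= i < n.+2) f i * fps_inv f (n.+1 - i)%N.
Proof.
rewrite {1}/fps_inv /= nth_rcons fps_inv_seq_size ltnn eqxx; congr (_ * _).
apply: eq_big_nat => i /andP[lt_0i _]; rewrite fps_inv_seq_nth //.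
by case: i lt_0i => // i _; rewrite subSS leq_subr.
Qed.

Lemma fps_inv_unique f g : fmul f g = fone -> fps_inv f = g.
Proof.
move=> fg1; have fg0 : f 0%N * g 0%N = 1.
  by rewrite -[RHS]/(fone 0) -fg1 /fmul big_ord1.
have f0_neq0 : f 0%N != 0 by apply: contra_eq_neq fg0 => ->; rewrite mul0r.
apply: functional_extensionality; elim/ltn_ind => -[|n] IH.
  by rewrite /fps_inv /= -[g 0%N](mulKf f0_neq0) fg0 mulr1.
have := congr1 (fun h => h n.+1) fg1.
rewrite /fmul /fone big_ord_recl subn0 /= => fgS.
rewrite fps_invS big_add1 /= big_mkord; apply: (mulfI f0_neq0).
rewrite mulrA mulrN mulfV // mulN1r; apply/eqP; rewrite eq_sym -addr_eq0; apply/eqP.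
apply: etrans fgS; congr (_ + _); apply: eq_bigr => i _.
by rewrite IH // subSS ltnS leq_subr.
Qed.

Lemma fps_inv_pow1mX K : fps_inv (fexp f1mX K.+1) = binom_series K.
Proof.
apply: fps_inv_unique; rewrite /= -/(fexp f1mX K) -fmulA.
by have := fmul_pow1mX_binom K 0; rewrite addn0 => ->; exact: fmul_1mX_binom0.
Qed.

Lemma coef_rational j K i :
  fmul (fexp fX j) (fps_inv (fexp f1mX K.+1)) i =
  if (i < j)%N then 0 else ('C(i - j + K, K))%:R.
Proof. by rewrite fmulXn_shift fps_inv_pow1mX. Qed.

Lemma fexp1 f : fexp f 1 = f.
Proof. by rewrite /= fmulC fmul1. Qed.

Lemma coef_shifted_square s i :
  fmul (fexp fX s.+1) (fps_inv (fexp f1mX 2)) i = (i - s)%N%:R.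
Proof.
rewrite coef_rational; case: ltnP => [lt_is | le_si].
  by rewrite (eqP (_ : i - s == 0)%N) // subn_eq0 -ltnS.
by rewrite bin1; congr _%:R; lia.
Qed.

Lemma coef_zeta j i : zeta j i = ('C(i, j))%:R.
Proof.
rewrite /zeta coef_rational; case: ltnP => [lt_ij | le_ji]; first by rewrite bin_small.
by rewrite subnK.
Qed.

Local Open Scope nat_scope.

(* Number of maps g : T -> 'I_n such that r u v implies R (g u) (g v); Omega and
   OmegaP are the instances (slt le, <) and (le, <=). *)
Definition hom_count (T : finType) (r : rel T) (R : rel nat) (n : nat) : nat :=
  #|[set g : {ffun T -> 'I_n} | [forall u, forall v, r u v ==> R (g u) (g v)]]|.

Lemma card_set_sum (T : finType) (P : pred T) : #|[set x | P x]| = \sum_x P x.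
Proof.
rewrite -sum1_card big_mkcond /=; apply: eq_bigr => x _; rewrite inE.
by case: (P x).
Qed.

Lemma sum_interval n lo len (Q : pred nat) : lo + len <= n ->
  (forall x, Q x = (lo <= x < lo + len)) -> \sum_(c < n) Q c = len.
Proof.
move=> le_n Qint.
rewrite -(big_mkord predT (fun c => nat_of_bool (Q c))).
rewrite (big_cat_nat (leq0n lo)) ?(leq_trans (leq_addr len lo)) //=.
rewrite (big_cat_nat (leq_addr len lo)) //=.
rewrite [X in X + _]big1_seq ?[X in _ + (_ + X)]big1_seq ?add0n ?addn0 => [|i|i].
- rewrite (eq_big_nat _ _ (F2 := fun _ => 1)) => [|i lt_i]; last by rewrite Qint lt_i.
  by rewrite sum_nat_const_nat addKn muln1.
- by rewrite mem_index_iota Qint => /andP[_ /andP[? ?]]; apply/eqP; rewrite eqb0; lia.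
- by rewrite mem_index_iota Qint => /andP[_ /andP[? ?]]; apply/eqP; rewrite eqb0; lia.
Qed.

Lemma hom_count_interval (T : finType) (r : rel T) (R : rel nat) n lo len (Q : pred nat) :
  lo + len <= n -> (forall x, Q x = (lo <= x < lo + len)) ->
  (forall x y, R (x + lo) (y + lo) = R x y) ->
  #|[set g : {ffun T -> 'I_n} |
     [forall u, forall v, r u v ==> R (g u) (g v)] && [forall u, Q (g u)]]|
  = hom_count r R len.
Proof.
move=> le_n Qint R_shift.
have shift_lt (x : 'I_len) : x + lo < n by rewrite addnC (leq_trans _ le_n) ?ltn_add2l.
pose shift (g : {ffun T -> 'I_len}) : {ffun T -> 'I_n} :=
  [ffun u => Ordinal (shift_lt (g u))].
have shift_inj : injective shift.
  move=> g1 g2 /ffunP eq_g; apply/ffunP => u; have := eq_g u; rewrite !ffunE.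
  by move=> /(congr1 val) /= /addIn /val_inj.
rewrite /hom_count -(card_imset _ shift_inj); apply: eq_card => g.
rewrite inE; apply/idP/imsetP.
  move=> /andP[/forallP g_hom /forallP g_in].
  have [lo_le lt_len] : (forall u, lo <= g u) /\ (forall u, g u - lo < len).
    by split=> u; have := g_in u; rewrite Qint => /andP[lo_le lt_len]; rewrite ?ltn_subLR.
  exists [ffun u => Ordinal (lt_len u)].
    rewrite inE; apply/forallP => u; apply/forallP => v; rewrite !ffunE /=.
    by rewrite -R_shift !subnK ?lo_le //; exact: (forallP (g_hom u) v).
  by apply/ffunP => u; rewrite !ffunE; apply: val_inj; rewrite /= subnK ?lo_le.
move=> [g' g'_hom ->]; rewrite inE in g'_hom; apply/andP; split.
  apply/forallP => u; apply/forallP => v; rewrite !ffunE /= R_shift.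
  exact: (forallP ((forallP g'_hom) u) v).
by apply/forallP => u; rewrite ffunE /= Qint leq_addl /= addnC ltn_add2l.
Qed.

Definition handle_min : 'I_3 := @Ordinal 3 0 isT.
Definition handle_mid : 'I_3 := @Ordinal 3 1 isT.
Definition handle_max : 'I_3 := @Ordinal 3 2 isT.

Lemma sum_prod (A B : finType) (F : A * B -> nat) :
  \sum_p F p = \sum_a \sum_b F (a, b).
Proof. by rewrite pair_big; apply: eq_bigr => -[]. Qed.

Section HandleMaps.
Variables (T : finType) (rD : rel (T + 'I_3)%type) (r : rel T) (R : rel nat) (n : nat).
Hypothesis rD_ll : forall u v, rD (inl u) (inl v) = r u v.
Hypothesis rD_lr : forall u j, rD (inl u) (inr j) = (val j == 2).
Hypothesis rD_rl : forall i v, rD (inr i) (inl v) = (val i == 0).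

Definition handle_val (a b c : 'I_n) (i : 'I_3) : 'I_n :=
  if val i == 0 then a else if val i == 1 then c else b.

Definition glue (p : 'I_n * ('I_n * ('I_n * {ffun T -> 'I_n}))) :
  {ffun (T + 'I_3)%type -> 'I_n} :=
  [ffun x => match x with inl u => p.2.2.2 u | inr i => handle_val p.1 p.2.1 p.2.2.1 i end].

Definition unglue (F : {ffun (T + 'I_3)%type -> 'I_n}) :
  'I_n * ('I_n * ('I_n * {ffun T -> 'I_n})) :=
  (F (inr handle_min), (F (inr handle_max), (F (inr handle_mid), [ffun u => F (inl u)]))).

Lemma glueK : cancel glue unglue.
Proof.
move=> [a [b [c g]]]; rewrite /unglue !ffunE /handle_val /=; congr (_, (_, (_, _))).
by apply/ffunP => u; rewrite !ffunE.
Qed.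

Lemma unglueK : cancel unglue glue.
Proof.
move=> F; apply/ffunP => -[u|i]; rewrite !ffunE //= /handle_val.
by case: i => -[|[|[|k]]] lt_k //=; congr (F (inr _)); apply: val_inj.
Qed.

Definition handle_ok (a b c : 'I_n) : bool :=
  [forall i, forall j, rD (inr i) (inr j) ==> R (handle_val a b c i) (handle_val a b c j)].

Definition window_count (a b : nat) : nat :=
  #|[set g : {ffun T -> 'I_n} |
     [forall u, forall v, r u v ==> R (g u) (g v)] && [forall u, R a (g u) && R (g u) b]]|.

Lemma glue_hom a b c g :
  [forall x, forall y, rD x y ==> R (glue (a, (b, (c, g))) x) (glue (a, (b, (c, g))) y)]
  = handle_ok a b c &&
    ([forall u, forall v, r u v ==> R (g u) (g v)] && [forall u, R a (g u) && R (g u) b]).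
Proof.
apply/idP/idP.
  move=> /forallP F_hom.
  have {}F_hom x y : rD x y -> R (glue (a, (b, (c, g))) x) (glue (a, (b, (c, g))) y).
    by move/forallP: (F_hom x) => /(_ y) /implyP.
  apply/and3P; split.
  - apply/forallP => i; apply/forallP => j; apply/implyP => /F_hom.
    by rewrite !ffunE.
  - apply/forallP => u; apply/forallP => v; apply/implyP.
    by rewrite -rD_ll => /F_hom; rewrite !ffunE.
  - apply/forallP => u; apply/andP; split.
      by have := @F_hom (inr handle_min) (inl u); rewrite rD_rl !ffunE; apply.
    by have := @F_hom (inl u) (inr handle_max); rewrite rD_lr !ffunE; apply.
move=> /and3P[/forallP ok /forallP g_hom /forallP g_in].
apply/forallP => -[u|i]; apply/forallP => -[v|j]; rewrite !ffunE ?rD_ll ?rD_lr ?rD_rl.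
- exact: (forallP (g_hom u) v).
- by apply/implyP => /eqP j_2; rewrite /handle_val j_2; case/andP: (g_in u).
- by apply/implyP => /eqP i_0; rewrite /handle_val i_0; case/andP: (g_in v).
- exact: (forallP (ok i) j).
Qed.

Lemma hom_count_handle :
  hom_count rD R n = \sum_(a < n) \sum_(b < n) (\sum_(c < n) handle_ok a b c) * window_count a b.
Proof.
rewrite /hom_count card_set_sum (reindex glue) /=; last first.
  by apply: onW_bij; exists unglue; [exact: glueK | exact: unglueK].
rewrite sum_prod; apply: eq_bigr => a _; rewrite sum_prod; apply: eq_bigr => b _.
rewrite sum_prod big_distrl; apply: eq_bigr => c _ /=.
rewrite /window_count card_set_sum big_distrr /=; apply: eq_bigr => g _.
by rewrite glue_hom mulnb.
Qed.
End HandleMaps.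

Section HandleD.
Variables (T : finType) (le : rel T).

Lemma Omega_hom_count n : Omega le n = hom_count (slt le) ltn n.
Proof. by []. Qed.

Lemma OmegaP_hom_count n : OmegaP le n = hom_count le leq n.
Proof. by []. Qed.

Lemma handle_ok_strict n (a b c : 'I_n) :
  handle_ok (slt (D_le le)) ltn a b c = (a < c < b).
Proof.
apply/idP/andP => [/forallP ok | [lt_ac lt_cb]].
  split; [move/forallP: (ok handle_min) => /(_ handle_mid)
         | move/forallP: (ok handle_mid) => /(_ handle_max)]; by move/implyP; apply.
apply/forallP => -[[|[|[|i]]] lt_i]; apply/forallP => -[[|[|[|j]]] lt_j] //=;
  rewrite /handle_val /=; apply/implyP => //; rewrite /slt /=; lia.
Qed.

Lemma handle_ok_weak n (a b c : 'I_n) :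
  handle_ok (D_le le) leq a b c = (a <= c <= b).
Proof.
apply/idP/andP => [/forallP ok | [le_ac le_cb]].
  split; [move/forallP: (ok handle_min) => /(_ handle_mid)
         | move/forallP: (ok handle_mid) => /(_ handle_max)]; by move/implyP; apply.
apply/forallP => -[[|[|[|i]]] lt_i]; apply/forallP => -[[|[|[|j]]] lt_j] //=;
  rewrite /handle_val /=; apply/implyP => //; lia.
Qed.

Lemma handle_pair_strict n (a b : 'I_n) :
  (\sum_(c < n) handle_ok (slt (D_le le)) ltn a b c) * window_count (slt le) ltn n a b
  = (a <= b) * ((b - a).-1 * Omega le (b - a).-1).
Proof.
under eq_bigr do rewrite handle_ok_strict.
case: (ltnP a b) => [lt_ab | le_ba]; last first.
  rewrite big1 => [|c _]; last by apply/eqP; rewrite eqb0; apply/negP => /andP[? ?]; lia.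
  by move: le_ba; rewrite -subn_eq0 => /eqP ->; rewrite muln0.
have le_n : a.+1 + (b - a).-1 <= n by have := ltn_ord b; lia.
have interval x : (a < x < b) = (a.+1 <= x < a.+1 + (b - a).-1).
  by apply/idP/idP => /andP[? ?]; apply/andP; split; lia.
rewrite (sum_interval le_n interval) /window_count.
have lt_shift x y : (x + a.+1 < y + a.+1) = (x < y) by exact: ltn_add2r.
by rewrite (hom_count_interval (slt le) le_n interval lt_shift) (ltnW lt_ab) mul1n.
Qed.

Lemma handle_pair_weak n (a b : 'I_n) :
  (\sum_(c < n) handle_ok (D_le le) leq a b c) * window_count le leq n a b
  = (a <= b) * ((b - a).+1 * OmegaP le (b - a).+1).
Proof.
under eq_bigr do rewrite handle_ok_weak.
case: (leqP a b) => [le_ab | lt_ba]; last first.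
  rewrite big1 => [|c _]; last by apply/eqP; rewrite eqb0; apply/negP => /andP[? ?]; lia.
  by rewrite mul0n.
have le_n : a + (b - a).+1 <= n by have := ltn_ord b; lia.
have interval x : (a <= x <= b) = (a <= x < a + (b - a).+1).
  by apply/idP/idP => /andP[? ?]; apply/andP; split; lia.
rewrite (sum_interval le_n interval) /window_count.
have le_shift x y : (x + a <= y + a) = (x <= y) by exact: leq_add2r.
by rewrite (hom_count_interval le le_n interval le_shift) mul1n.
Qed.
End HandleD.

Lemma sum_gap_step m (h : nat -> nat) :
  \sum_(d < m.+1) (m.+1 - d) * h d = \sum_(d < m) (m - d) * h d + \sum_(d < m.+1) h d.
Proof.
rewrite big_ord_recr [X in _ = _ + X]big_ord_recr /= subSnn mul1n addnA; congr (_ + _).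
rewrite -big_split; apply: eq_bigr => d _ /=.
by rewrite subSn 1?ltnW // mulSn addnC.
Qed.

Lemma sum_pairs_by_gap n (h : nat -> nat) :
  \sum_(a < n) \sum_(b < n) (a <= b) * h (b - a) = \sum_(d < n) (n - d) * h d.
Proof.
elim: n => [|n IH]; first by rewrite !big_ord0.
rewrite big_ord_recr /=.
under eq_bigr do rewrite big_ord_recr /=.
rewrite big_split /= IH.
rewrite [X in _ + X = _]big_ord_recr /= [X in _ + (X + _) = _]big1 => [|b _]; last first.
  by rewrite leqNgt ltn_ord.
rewrite leqnn subnn add0n mul1n.
rewrite sum_gap_step [X in X + _ = _ + _]addnC.
rewrite big_ord_recl /=.
have -> : \sum_(i < n) (i <= n) * h (n - i) = \sum_(i < n) h (bump 0 i).
  rewrite (reindex_inj rev_ord_inj) /=; apply: eq_bigr => i _.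
  by rewrite /bump /= add1n leq_subr mul1n subKn.
by rewrite -addnA [in LHS]addnC -addnA.
Qed.

Lemma Omega_handle (T : finType) (le : rel T) n :
  Omega (D_le le) n = \sum_(d < n) (n - d) * (d.-1 * Omega le d.-1).
Proof.
rewrite Omega_hom_count (hom_count_handle (r := slt le)) //.
rewrite -(sum_pairs_by_gap n (fun d => d.-1 * Omega le d.-1)).
by apply: eq_bigr => a _; apply: eq_bigr => b _; rewrite handle_pair_strict.
Qed.

Lemma OmegaP_handle (T : finType) (le : rel T) n :
  OmegaP (D_le le) n = \sum_(d < n) (n - d) * (d.+1 * OmegaP le d.+1).
Proof.
rewrite OmegaP_hom_count (hom_count_handle (r := le)) //.
rewrite -(sum_pairs_by_gap n (fun d => d.+1 * OmegaP le d.+1)).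
by apply: eq_bigr => a _; apply: eq_bigr => b _; rewrite handle_pair_weak.
Qed.

(* The gap sums are convolutions: both sides equal sum_(j < m) (m - s - j) w(j),
   the left one via d = j + s and the right one via i = m - j. *)
Lemma sum_gap_shift s m (w : nat -> nat) :
  \sum_(d < m) (m - d) * ((s <= d) * w (d - s)) = \sum_(i < m.+1) (i - s) * w (m - i).
Proof.
have -> : \sum_(i < m.+1) (i - s) * w (m - i) = \sum_(j < m) (m - s - j) * w j.
  rewrite (reindex_inj rev_ord_inj) big_ord_recr /= subnn sub0n mul0n addn0.
  by apply: eq_bigr => j _; rewrite subSS subKn 1?subnAC // ltnW.
rewrite -(big_mkord xpredT (fun d => (m - d) * ((s <= d) * w (d - s)))).
rewrite -(big_mkord xpredT (fun j => (m - s - j) * w j)).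
case: (leqP s m) => [le_sm | lt_ms]; last first.
  rewrite !big1_seq // => d; rewrite mem_index_iota => /andP[_ /andP[_ lt_dm]].
  - by rewrite (eqP (_ : m - s == 0)) ?sub0n // subn_eq0 ltnW.
  - by rewrite leqNgt (ltn_trans lt_dm lt_ms) muln0.
rewrite (big_cat_nat (leq0n s) le_sm) big1_seq /= => [|d]; last first.
  by rewrite mem_index_iota => /andP[_ lt_ds]; rewrite leqNgt lt_ds muln0.
rewrite -{1}[s]add0n big_addn add0n (big_cat_nat (leq0n (m - s)) (leq_subr s m)) /=.
rewrite [X in _ = _ + X]big1_seq ?addn0 => [|j]; last first.
  rewrite mem_index_iota => /andP[_ /andP[le_j _]].
  by rewrite (eqP (_ : m - s - j == 0)) ?subn_eq0.
by apply: eq_big_nat => j _; rewrite leq_addl addnK mul1n subnDA subnAC.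
Qed.

Lemma slt_chain n (u v : 'I_n) : slt (@chain_le n) u v = (u < v).
Proof. by rewrite /slt /chain_le ltn_neqAle. Qed.

Lemma nth_val_tuple n k (t : n.-tuple 'I_k) (u : 'I_n) :
  nth 0 [seq val x | x <- t] u = tnth t u.
Proof. by rewrite (nth_map (tnth t u)) ?size_tuple // -tnth_nth. Qed.

(* Strictly increasing maps <n> -> <k> are the n-subsets of <k>. *)
Lemma Omega_chain n k : Omega (@chain_le n) k = 'C(k, n).
Proof.
rewrite -(card_ltn_sorted_tuples n k) /Omega.
pose of_tuple (t : n.-tuple 'I_k) : {ffun 'I_n -> 'I_k} := [ffun i => tnth t i].
have of_tuple_inj : injective of_tuple.
  by move=> t1 t2 /ffunP eq_t; apply: eq_from_tnth => i; have := eq_t i; rewrite !ffunE.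
rewrite -(card_imset _ of_tuple_inj); apply: eq_card => f; rewrite inE; apply/idP/imsetP.
  move=> f_mono; exists [tuple f i | i < n]; last first.
    by apply/ffunP => i; rewrite !ffunE tnth_mktuple.
  rewrite inE; apply/(sortedP 0) => i; rewrite size_map size_tuple => lt_i1n.
  have lt_in : i < n by apply: ltnW.
  rewrite (nth_val_tuple _ (Ordinal lt_in)) (nth_val_tuple _ (Ordinal lt_i1n)) !tnth_mktuple.
  by move: (forallP (forallP f_mono (Ordinal lt_in)) (Ordinal lt_i1n)); rewrite slt_chain ltnSn.
move=> [t t_sorted ->]; rewrite inE in t_sorted.
apply/forallP => u; apply/forallP => v; apply/implyP; rewrite slt_chain => lt_uv.
rewrite !ffunE -!nth_val_tuple.
by apply: (sorted_ltn_nth ltn_trans 0 t_sorted) => //; rewrite inE size_map size_tuple.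
Qed.

Lemma sum_mul_bin n m : \sum_(d < m) d * 'C(d, n) = n * 'C(m, n.+1) + n.+1 * 'C(m, n.+2).
Proof.
elim: m => [|m IH]; first by rewrite big_ord0 !bin0n /= !muln0.
rewrite big_ord_recr /= IH !binS !mulnDr (mul_bin_left m n).
have -> : m * 'C(m, n) = n * 'C(m, n) + (m - n) * 'C(m, n).
  case: (leqP n m) => [le_nm | lt_mn]; first by rewrite -mulnDl subnKC.
  by rewrite bin_small ?muln0.
by lia.
Qed.

Lemma sum_gap_chain n m :
  \sum_(d < m) (m - d) * (d.-1 * 'C(d.-1, n)) = n * 'C(m, n.+2) + n.+1 * 'C(m, n.+3).
Proof.
elim: m => [|m IH]; first by rewrite big_ord0 !bin0n /= !muln0.
rewrite (sum_gap_step m (fun d => d.-1 * 'C(d.-1, n))) IH big_ord_recl /= mul0n add0n.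
rewrite (eq_bigr (fun d : 'I_m => d * 'C(d, n))) => [|d _]; last by [].
by rewrite sum_mul_bin !binS; lia.
Qed.

(* (d - 1) Omega(d - 1) vanishes for d < 2, matching the shift s = 2. *)
Lemma pred_mul_shift (F : nat -> nat) d :
  d.-1 * F d.-1 = (2 <= d) * ((d - 2).+1 * F (d - 2).+1).
Proof. by case: d => [|[|d]] /=; rewrite ?mul0n ?subSS ?subn0 ?mul1n. Qed.

Lemma ZX_Omega (T : finType) (le : rel T) m : Omega le 0 = 0 -> ZX le m = (Omega le m)%:R.
Proof. by case: m => [|m] //= ->. Qed.

Lemma ZXP_OmegaP (T : finType) (le : rel T) m :
  OmegaP le 0 = 0 -> ZXP le m = (OmegaP le m)%:R.
Proof. by case: m => [|m] //= ->. Qed.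

Local Open Scope ring_scope.

Lemma coef_mul_deriv s (Z : fps) (Om : nat -> nat) m :
  (forall k, Z k.+1 = (Om k.+1)%:R) ->
  fmul (fmul (fexp fX s.+1) (fps_inv (fexp f1mX 2))) (fderiv Z) m
  = (\sum_(d < m) (m - d) * ((s <= d) * ((d - s).+1 * Om (d - s).+1)))%N%:R.
Proof.
move=> Z_Om; rewrite (sum_gap_shift s m (fun k => k.+1 * Om k.+1)%N) natr_sum.
apply: eq_bigr => i _.
by rewrite coef_shifted_square /fderiv Z_Om -mulrnA -natrM [(Om _ * _)%N]mulnC.
Qed.

Theorem mainTheorem6 :
  (forall (T : finType) (le : rel T), is_poset le -> (0 < #|T|)%N ->
     ZX (D_le le) = fmul (fmul (fexp fX 3) (fps_inv (fexp f1mX 2))) (fderiv (ZX le))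
  /\ ZXP (D_le le) = fmul (fmul fX (fps_inv (fexp f1mX 2))) (fderiv (ZXP le)))
  /\
  (forall n : nat, (1 <= n)%N ->
     ZX (D_le (@chain_le n)) =
       fadd (fscale n%:R (zeta n.+2)) (fscale n.+1%:R (zeta n.+3))).
Proof.
split=> [T le _ _ | n _]; last first.
  apply: functional_extensionality => m.
  rewrite ZX_Omega ?Omega_handle ?big_ord0 // /fadd /fscale !coef_zeta.
  rewrite -!natrM -natrD -sum_gap_chain; congr _%:R.
  by apply: eq_bigr => d _; rewrite Omega_chain.
split; apply: functional_extensionality => m.
  rewrite ZX_Omega ?Omega_handle ?big_ord0 // (coef_mul_deriv 2%N (Om := Omega le)) //.
  by congr _%:R; apply: eq_bigr => d _; rewrite pred_mul_shift.
rewrite ZXP_OmegaP ?OmegaP_handle ?big_ord0 // -(fexp1 fX).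
rewrite (coef_mul_deriv 0%N (Om := OmegaP le)) //.
by congr _%:R; apply: eq_bigr => d _; rewrite subn0 leq0n mul1n.
Qed.
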